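(* Let $\Gamma$ be a $Q$-polynomial distance-regular graph with vertex set $X$ and diameter $D$, and suppose $\Gamma$ is pseudo-vertex-transitive. Then for all integers $0\le i\le D$ and all vertices $x,y\in X$, the $i$-th subconstituents $\Delta_i(x)$ and $\Delta_i(y)$ have the same spectrum.
   Context: Let $\Gamma$ have distance $\partial$, adjacency matrix $A$, $V=\mathbb{C}^X$. For $x\in X$ and $0\le i\le D$, $\Delta_i(x)$ is the subgraph induced on $\{y:\partial(x,y)=i\}$, and $E^*_i(x)$ is the diagonal matrix with $(E^*_i(x))_{yy}=1$ if $\partial(x,y)=i$ and $0$ otherwise. The Terwilliger algebra $T(x)$ is the subalgebra of $\mathrm{Mat}_X(\mathbb{C})$ generated by $A,E^*_0(x),\dots,E^*_D(x)$. $\Gamma$ is pseudo-vertex-transitive if for all $x,y\in X$: (i) there is a $\mathbb{C}$-algebra isomorphism $T(x)\to T(y)$ sending $A\mapsto A$ and $E^*_i(x)\mapsto E^*_i(y)$ for all $i$; and (ii) there is a $\mathbb{C}$-linear bijection $\rho:V\to V$ with $\rho A=A\rho$ and $\rho E^*_i(x)=E^*_i(y)\rho$ for all $i$. The spectrum of a graph is the multiset of eigenvalues of its adjacency matrix. $Q$-polynomial means: the primitive idempotents of the Bose–Mesner algebra can be ordered $E_0,\dots,E_D$ so that the Krein parameters $q^h_{ij}$ (defined by $E_i\circ E_j=|X|^{-1}\sum_h q^h_{ij}E_h$, $\circ$ the entrywise product) vanish when one of $h,i,j$ exceeds the sum of the other two and are nonzero when one equals the sum of the other two. *)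

From HB Require Import structures.
From mathcomp Require Import all_boot all_order all_algebra.
From mathcomp Require Import Rstruct complex.
From Stdlib Require Import Reals.
Set Implicit Arguments. Unset Strict Implicit. Unset Printing Implicit Defensive.
Import Order.TTheory GRing.Theory Num.Theory.
Local Open Scope ring_scope.

Definition C : numClosedFieldType := (Rdefinitions.R)[i].

Section Graph.
Variables (n : nat) (adj : rel 'I_n).

Fixpoint walk (k : nat) (x y : 'I_n) : bool :=
  match k with
  | 0 => x == y
  | k'.+1 => [exists z, adj x z && walk k' z y]
  end.

Definition connected_graph : Prop := forall x y : 'I_n, exists k, walk k x y.

(* path-length distance: least k with a walk of length k from x to y
   (in a connected graph on n vertices this is < n). *)
Definition dist (x y : 'I_n) : nat := find (fun k => walk k x y) (iota 0 n).

Definition diameter : nat := \max_(x : 'I_n) \max_(y : 'I_n) dist x y.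

Definition simple_graph : Prop :=
  symmetric adj /\ irreflexive adj.

(* distance-regular: connected simple graph such that
   p^h_{ij} = |{z : d(x,z)=i, d(y,z)=j}| depends only on h = d(x,y), i, j *)
Definition distance_regular : Prop :=
  [/\ simple_graph, connected_graph &
   forall x y x' y' : 'I_n, dist x y = dist x' y' ->
     forall i j : nat,
       #|[set z | (dist x z == i) && (dist y z == j)]| =
       #|[set z | (dist x' z == i) && (dist y' z == j)]| ].

Definition adjmx : 'M[C]_n := \matrix_(x, y) (adj x y)%:R.

Definition distmx (i : nat) : 'M[C]_n := \matrix_(x, y) (dist x y == i)%:R.

(* membership in the Bose-Mesner algebra span{A_0,...,A_D} *)
Definition in_BM (M : 'M[C]_n) : Prop :=
  exists c : 'I_diameter.+1 -> C, M = \sum_(i < diameter.+1) c i *: distmx i.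

Definition primitive_idempotents (E : 'I_diameter.+1 -> 'M[C]_n) : Prop :=
  [/\ forall i, in_BM (E i),
      forall i, E i != 0,
      forall i j, E i *m E j = (if i == j then E i else 0) &
      \sum_(i < diameter.+1) E i = 1%:M ].

Definition hadamard (M N : 'M[C]_n) : 'M[C]_n := \matrix_(x, y) (M x y * N x y).

(* q h i j = Krein parameter q^h_{ij} :  E_i o E_j = |X|^{-1} sum_h q^h_{ij} E_h *)
Definition krein_parameters (E : 'I_diameter.+1 -> 'M[C]_n)
  (q : 'I_diameter.+1 -> 'I_diameter.+1 -> 'I_diameter.+1 -> C) : Prop :=
  forall i j, hadamard (E i) (E j) =
              (n%:R)^-1 *: \sum_(h < diameter.+1) q h i j *: E h.

Definition Q_polynomial : Prop :=
  exists (E : 'I_diameter.+1 -> 'M[C]_n)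
         (q : 'I_diameter.+1 -> 'I_diameter.+1 -> 'I_diameter.+1 -> C),
  [/\ primitive_idempotents E, krein_parameters E q,
      (forall h i j : 'I_diameter.+1,
         [|| ltn (addn i j) h, ltn (addn h j) i | ltn (addn h i) j] -> q h i j = 0) &
      (forall h i j : 'I_diameter.+1,
         [|| eqn h (addn i j), eqn i (addn h j) | eqn j (addn h i)] ->
         q h i j != 0) ].

Definition dual_idem (x : 'I_n) (i : nat) : 'M[C]_n :=
  \matrix_(y, z) ((y == z) && (dist x y == i))%:R.

Definition Tgen (x : 'I_n) (g : option 'I_diameter.+1) : 'M[C]_n :=
  match g with None => adjmx | Some i => dual_idem x i end.

Definition Tword (x : 'I_n) (w : seq (option 'I_diameter.+1)) : 'M[C]_n :=
  foldr (fun g M => Tgen x g *m M) 1%:M w.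

(* membership in the Terwilliger algebra T(x): linear combinations of words
   in the generators A, E*_0(x), ..., E*_D(x) *)
Definition in_T (x : 'I_n) (M : 'M[C]_n) : Prop :=
  exists s : seq (C * seq (option 'I_diameter.+1)),
    M = \sum_(p <- s) p.1 *: Tword x p.2.

Definition T_iso (x y : 'I_n) : Prop :=
  exists phi : 'M[C]_n -> 'M[C]_n,
     (forall M, in_T x M -> in_T y (phi M))
  /\ (forall M N, in_T x M -> in_T x N -> phi (M + N) = phi M + phi N)
  /\ (forall (c : C) M, in_T x M -> phi (c *: M) = c *: phi M)
  /\ (forall M N, in_T x M -> in_T x N -> phi (M *m N) = phi M *m phi N)
  /\ (forall M N, in_T x M -> in_T x N -> phi M = phi N -> M = N)
  /\ (forall N, in_T y N -> exists2 M, in_T x M & phi M = N)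
  /\ phi adjmx = adjmx
  /\ (forall i : 'I_diameter.+1, phi (dual_idem x i) = dual_idem y i).

Definition V_iso (x y : 'I_n) : Prop :=
  exists rho : 'M[C]_n,
  [/\ rho \in unitmx, rho *m adjmx = adjmx *m rho &
      forall i : 'I_diameter.+1, rho *m dual_idem x i = dual_idem y i *m rho ].

Definition pseudo_vertex_transitive : Prop :=
  forall x y : 'I_n, T_iso x y /\ V_iso x y.

Definition subconst_set (x : 'I_n) (i : nat) : {set 'I_n} := [set y | dist x y == i].

Definition subconst_adj (x : 'I_n) (i : nat) : 'M[C]_(#|subconst_set x i|) :=
  \matrix_(a, b) (adj (enum_val a) (enum_val b))%:R.

End Graph.

(* spectrum of a square matrix, as a multiset: eigenvalue |-> algebraic multiplicity *)
Definition spectrum (m : nat) (M : 'M[C]_m) : C -> nat :=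
  fun lam => mup lam (char_poly M).

Definition same_spectrum (m1 m2 : nat) (M1 : 'M[C]_m1) (M2 : 'M[C]_m2) : Prop :=
  forall lam : C, spectrum M1 lam = spectrum M2 lam.

(* The adjacency matrix of Delta_i(x) is the compression J A J^T of A to the
   coordinates in Delta_i(x), where J^T J = E*_i(x).  The map rho of condition
   (ii) commutes with A and carries E*_i(x) to E*_i(y), so J_y rho J_x^T is an
   invertible matrix intertwining the two compressions, which are therefore
   similar. *)
From mathcomp Require Import all_boot all_order all_algebra.
Set Implicit Arguments. Unset Strict Implicit. Unset Printing Implicit Defensive.
Import Order.TTheory GRing.Theory Num.Theory.
Local Open Scope ring_scope.

Lemma char_poly_conj (R : comNzRingType) m (P Q B : 'M[R]_m) :
  Q *m P = 1%:M -> char_poly (P *m B *m Q) = char_poly B.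
Proof.
move=> QP; have PQ := mulmx1C QP.
rewrite /char_poly /char_poly_mx.
have -> : 'X%:M - map_mx polyC (P *m B *m Q) =
          map_mx polyC P *m ('X%:M - map_mx polyC B) *m map_mx polyC Q.
  rewrite mulmxBr mulmxBl !map_mxM; congr (_ - _).
  by rewrite scalar_mxC -mulmxA -map_mxM PQ map_mx1 mulmx1.
by rewrite !det_mulmx mulrC mulrA -det_mulmx -map_mxM QP map_mx1 det1 mul1r.
Qed.

Lemma mx_rinv_leq (R : fieldType) m1 m2 (P : 'M[R]_(m2, m1)) (Q : 'M[R]_(m1, m2)) :
  P *m Q = 1%:M -> (m2 <= m1)%N.
Proof.
move=> PQ; have := mxrankM_maxl P Q; rewrite PQ mxrank1 => le_m2_rP.
exact: leq_trans le_m2_rP (rank_leq_col P).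
Qed.

Lemma intertwined_char_poly (R : fieldType) m1 m2 (B1 : 'M[R]_m1) (B2 : 'M[R]_m2)
    (P : 'M[R]_(m2, m1)) (Q : 'M[R]_(m1, m2)) :
  P *m Q = 1%:M -> Q *m P = 1%:M -> P *m B1 = B2 *m P ->
  char_poly B1 = char_poly B2.
Proof.
move=> PQ QP PB.
have eq_m : m1 = m2.
  by apply/eqP; rewrite eqn_leq (mx_rinv_leq QP) (mx_rinv_leq PQ).
subst m2.
have -> : B2 = P *m B1 *m Q by rewrite PB -mulmxA PQ mulmx1.
by rewrite char_poly_conj.
Qed.

Section Compression.
Variables (R : fieldType) (n m1 m2 : nat).
Variables (Jx : 'M[R]_(m1, n)) (Jy : 'M[R]_(m2, n)) (A r : 'M[R]_n).
Hypotheses (Jx_coiso : Jx *m Jx^T = 1%:M) (Jy_coiso : Jy *m Jy^T = 1%:M).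
Hypotheses (r_unit : r \in unitmx) (rA : r *m A = A *m r).
Hypothesis rE : r *m (Jx^T *m Jx) = (Jy^T *m Jy) *m r.

Lemma compression_char_poly :
  char_poly (Jx *m A *m Jx^T) = char_poly (Jy *m A *m Jy^T).
Proof.
move: rE; set Ex := Jx^T *m Jx; set Ey := Jy^T *m Jy => rExy.
have riE : invmx r *m Ey = Ex *m invmx r.
  by rewrite -[LHS]mulmx1 -(mulmxV r_unit) mulmxA -(mulmxA _ Ey) -rExy
             mulmxA mulVmx // mul1mx.
have JyrEx : Jy *m r *m Ex = Jy *m r.
  by rewrite -mulmxA rExy mulmxA mulmxA Jy_coiso mul1mx.
have JxriEy : Jx *m invmx r *m Ey = Jx *m invmx r.
  by rewrite -mulmxA riE mulmxA mulmxA Jx_coiso mul1mx.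
have EyrJx : Ey *m (r *m Jx^T) = r *m Jx^T.
  by rewrite mulmxA -rExy -mulmxA -(mulmxA Jx^T) Jx_coiso mulmx1.
apply: (@intertwined_char_poly _ _ _ _ _
          (Jy *m r *m Jx^T) (Jx *m invmx r *m Jy^T)).
- rewrite !mulmxA -(mulmxA (Jy *m r) Jx^T Jx) -/Ex JyrEx.
  by rewrite -(mulmxA Jy r) mulmxV // mulmx1 Jy_coiso.
- rewrite !mulmxA -(mulmxA (Jx *m invmx r) Jy^T Jy) -/Ey JxriEy.
  by rewrite -(mulmxA Jx (invmx r)) mulVmx // mulmx1 Jx_coiso.
- rewrite !mulmxA -(mulmxA (Jy *m r) Jx^T Jx) -/Ex JyrEx -(mulmxA Jy r A) rA.
  rewrite -(mulmxA (Jy *m A) Jy^T Jy) -/Ey -(mulmxA (Jy *m A *m Ey) r Jx^T).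
  by rewrite -(mulmxA (Jy *m A) Ey) EyrJx !mulmxA.
Qed.

End Compression.

Section SelectionMatrix.
Variables (R : pzSemiRingType) (n : nat) (S : {set 'I_n}).

Definition sel_mx : 'M[R]_(#|S|, n) := \matrix_(a, z) (enum_val a == z)%:R.

Lemma sel_mxM (m : nat) (M : 'M[R]_(n, m)) :
  sel_mx *m M = \matrix_(a, j) M (enum_val a) j.
Proof.
apply/matrixP => a j; rewrite !mxE (bigD1 (enum_val a)) //= big1 ?addr0.
  by rewrite !mxE eqxx mul1r.
by move=> z nz; rewrite !mxE eq_sym (negbTE nz) mul0r.
Qed.

Lemma mulmx_tr_sel (m : nat) (M : 'M[R]_(m, n)) :
  M *m sel_mx^T = \matrix_(i, b) M i (enum_val b).
Proof.
apply/matrixP => i b; rewrite !mxE (bigD1 (enum_val b)) //= big1 ?addr0.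
  by rewrite !mxE eqxx mulr1.
by move=> z nz; rewrite !mxE eq_sym (negbTE nz) mulr0.
Qed.

Lemma sel_mx_conj (M : 'M[R]_n) :
  sel_mx *m M *m sel_mx^T = \matrix_(a, b) M (enum_val a) (enum_val b).
Proof. by rewrite mulmx_tr_sel sel_mxM; apply/matrixP => a b; rewrite !mxE. Qed.

Lemma sel_mx_coiso : sel_mx *m sel_mx^T = 1%:M.
Proof.
rewrite mulmx_tr_sel; apply/matrixP => a b; rewrite !mxE (inj_eq enum_val_inj).
by case: (a == b).
Qed.

Lemma tr_sel_mxM : sel_mx^T *m sel_mx = \matrix_(y, z) ((y == z) && (y \in S))%:R.
Proof.
apply/matrixP => y z; rewrite !mxE.
have [yS | yNS] := boolP (y \in S); last first.
  rewrite andbF big1 // => a _; rewrite !mxE.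
  have [ay|] := eqVneq (enum_val a) y; last by rewrite mul0r.
  by move: (enum_valP a); rewrite ay (negbTE yNS).
rewrite (bigD1 (enum_rank_in yS y)) //= big1 ?addr0.
  by rewrite !mxE enum_rankK_in // eqxx mul1r andbT.
move=> a ne; rewrite !mxE.
have [ay|] := eqVneq (enum_val a) y; last by rewrite mul0r.
by case/eqP: ne; apply: enum_val_inj; rewrite ay enum_rankK_in.
Qed.

End SelectionMatrix.

Section Subconstituent.
Variables (n : nat) (adj : rel 'I_n) (i : nat).

Lemma dual_idem_sel (x : 'I_n) :
  dual_idem adj x i =
  (sel_mx C (subconst_set adj x i))^T *m sel_mx C (subconst_set adj x i).
Proof. by rewrite tr_sel_mxM; apply/matrixP => u v; rewrite !mxE inE. Qed.

Lemma subconst_adj_sel (x : 'I_n) :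
  subconst_adj adj x i =
  sel_mx C (subconst_set adj x i) *m adjmx adj *m (sel_mx C (subconst_set adj x i))^T.
Proof. by rewrite sel_mx_conj; apply/matrixP => a b; rewrite !mxE. Qed.

End Subconstituent.

Theorem lemma4p7 (n : nat) (adj : rel 'I_n) :
  distance_regular adj -> Q_polynomial adj -> pseudo_vertex_transitive adj ->
  forall (i : nat) (x y : 'I_n), (i <= diameter adj)%N ->
    same_spectrum (subconst_adj adj x i) (subconst_adj adj y i).
Proof.
move=> _ _ pvt i x y le_iD lam.
have [_ [rho [rho_unit rhoA rhoE]]] := pvt x y.
have rhoEi : rho *m dual_idem adj x i = dual_idem adj y i *m rho.
  exact: (rhoE (Ordinal (le_iD : (i < (diameter adj).+1)%N))).
rewrite !dual_idem_sel in rhoEi.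
rewrite /spectrum !subconst_adj_sel.
by rewrite (compression_char_poly (sel_mx_coiso _ _) (sel_mx_coiso _ _)
                                  rho_unit rhoA rhoEi).
Qed.
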